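(* (Higher-dimensional analogue of Theorem 1 for knots in $S^{4n+1}$.) The set of functions $\{\sigma_\omega\}_{\omega\in S}$ is linearly independent as a set of real-valued functions on the set of all $(4n+1)$-Seifert matrices: if $\omega_1,\dots,\omega_N\in S$ are distinct and $\sum_i c_i\sigma_{\omega_i}(V)=0$ for all such $V$, with $c_i\in\mathbb{R}$, then all $c_i=0$.
   Context: A $(4n+1)$-Seifert matrix (Seifert matrix of a knot in $S^{4n+1}$) is a $2g\times2g$ integral matrix $V$ with $\det(V+V^T)=\pm1$. For a unit complex number $\omega$, its signature is $\sigma_\omega(V)=\mathrm{sign}\big[(\omega-\bar\omega)\big((1-\omega)V-(1-\bar\omega)V^T\big)\big]$, and its Alexander polynomial is $\Delta_V(t)=\det(tV+V^T)$. $S$ is the set of unit complex numbers with positive imaginary part. *)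

From mathcomp Require Import all_boot all_algebra reals complex.
Set Implicit Arguments.
Unset Strict Implicit.
Unset Printing Implicit Defensive.
Import GRing.Theory Num.Theory.
Local Open Scope ring_scope.
Local Open Scope complex_scope.

Definition eigenvalues (R : realType) (n : nat) (H : 'M[R[i]]_n) : seq R[i] :=
  sval (closed_field_poly_normal (char_poly H)).

(* Signature ("sign") of a (Hermitian) complex matrix: number of positive
   eigenvalues minus number of negative eigenvalues, counted with multiplicity.
   (In the order of R[i], 0 < z means z is real and positive.) *)
Definition mx_signature (R : realType) (n : nat) (H : 'M[R[i]]_n) : int :=
  (count (fun z => 0 < z) (eigenvalues H))%:Z
  - (count (fun z => z < 0) (eigenvalues H))%:Z.

Definition seifert_matrix (g : nat) (V : 'M[int]_(g.*2)) : Prop :=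
  \det (V + V^T) = 1 \/ \det (V + V^T) = -1.

Definition in_S (R : realType) (w : R[i]) : Prop :=
  `|w| = 1 /\ 0 < 'Im w.

Definition seifert_signature (R : realType) (w : R[i]) (g : nat)
    (V : 'M[int]_(g.*2)) : int :=
  let VC := map_mx (fun z : int => z%:~R : R[i]) V in
  mx_signature ((w - w^*) *: ((1 - w) *: VC - (1 - w^*) *: VC^T)).

(* For the genus-2 Seifert matrices V(t, M) below, the Hermitian form
   (w - conj w)((1 - w) V - (1 - conj w) V^T) is traceless with determinant
   16 (Im w)^8 Q(tan^2(theta/2)), where w = e^(i theta) and
   Q(u) = 1 + (2 + 8M - 16t) u + (4M - 1)^2 u^2.  A traceless 4x4 Hermitian
   matrix with nonzero determinant has signature 0 or +-2 according as the
   determinant is positive or negative, so sigma_w(V(t, M)) vanishes exactly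
   where Q is positive.  Since tan^2(theta/2) is injective on S, among the
   omega_i with c_i <> 0 take the one with the least value T; choosing (t, M)
   with Q(T) < 0 and Q > 0 on the larger values makes the relation evaluated
   at V(t, M) read c_i sigma_(omega_i)(V) = 0 with sigma nonzero. *)

From mathcomp Require Import all_boot all_order all_algebra reals complex ring lra.
Set Implicit Arguments.
Unset Strict Implicit.
Unset Printing Implicit Defensive.

Import Order.TTheory GRing.Theory Num.Theory.
Local Open Scope ring_scope.

Definition hermitian_mx (C : numClosedFieldType) n (H : 'M[C]_n) : Prop :=
  forall i j, H j i = (H i j)^*.

Lemma hermitian_char_poly_root_real (C : numClosedFieldType) n (H : 'M[C]_n) z :
  hermitian_mx H -> root (char_poly H) z -> z \is Num.real.
Proof.
move=> Hh; rewrite -eigenvalue_root_char => /eigenvalueP [v Hv vnz].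
pose q := \sum_i \sum_j v 0 i * H i j * (v 0 j)^*.
pose n2 := \sum_j v 0 j * (v 0 j)^*.
have qE : q = z * n2.
  rewrite /q exchange_big /n2 mulr_sumr; apply: eq_bigr => j _.
  have := congr1 (fun m : 'rV_n => m 0 j) Hv; rewrite !mxE => e.
  by rewrite -mulr_suml e mulrA.
have q_real : q^* = q.
  rewrite /q rmorph_sum /= exchange_big; apply: eq_bigr => i _.
  rewrite rmorph_sum; apply: eq_bigr => j _.
  by rewrite !rmorphM /= conjCK -Hh; ring.
have n2_gt0 : 0 < n2.
  have [k vk] : exists k, v 0 k != 0.
    apply/existsP; apply: contraR vnz => /existsPn v0.
    by apply/eqP/rowP => j; rewrite mxE; apply/eqP; have := v0 j; rewrite negbK.
  rewrite /n2 (bigD1 k) //= ltr_wpDr //.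
    by apply: sumr_ge0 => l _; rewrite -normCK exprn_ge0.
  by rewrite -normCK exprn_gt0 // normr_gt0.
have -> : z = q / n2 by rewrite qE mulfK // lt0r_neq0.
rewrite CrealE rmorph_div ?unitfE ?lt0r_neq0 //= q_real.
by rewrite conj_Creal // gtr0_real.
Qed.

Lemma count_pos_eq_count_neg4 (R : realDomainType) (a b c d : R) :
  a + b + c + d = 0 -> a * b * c * d != 0 ->
  (count (fun x => 0 < x) [:: a; b; c; d] == count (fun x => x < 0) [:: a; b; c; d])
   = (0 < a * b * c * d).
Proof.
move=> hs hp.
have ha : a != 0 by apply: contraNneq hp => ->; rewrite !mul0r.
have hb : b != 0 by apply: contraNneq hp => ->; rewrite mulr0 !mul0r.
have hc : c != 0 by apply: contraNneq hp => ->; rewrite mulr0 !mul0r.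
have hd : d != 0 by apply: contraNneq hp => ->; rewrite mulr0.
rewrite -sgr_gt0 !sgrM.
case: (ltrgt0P a) ha => // ha _; case: (ltrgt0P b) hb => // hb _;
case: (ltrgt0P c) hc => // hc _; case: (ltrgt0P d) hd => // hd _;
rewrite ?(gtr0_sg ha) ?(ltr0_sg ha) ?(gtr0_sg hb) ?(ltr0_sg hb)
  ?(gtr0_sg hc) ?(ltr0_sg hc) ?(gtr0_sg hd) ?(ltr0_sg hd) /= ?ha ?hb ?hc ?hd
  ?(lt_gtF ha) ?(lt_gtF hb) ?(lt_gtF hc) ?(lt_gtF hd) /=
  ?mul1r ?mulN1r ?mulrN1 ?mulrNN ?mulr1 ?opprK ?ltr01 ?oppr_gt0 ?ltr10 /=;
first [done | exfalso; lra].
Qed.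

Lemma gap_above (R : realDomainType) (I : finType) (f : I -> R) (a : R) :
  exists2 d, 0 < d & forall j, a < f j -> a + d <= f j.
Proof.
case: (pickP (fun j => a < f j)) => [j0 a_lt_j0|none]; last first.
  by exists 1 => // j; rewrite none.
case: (arg_minP (P := fun j => a < f j) f a_lt_j0) => k a_lt_k k_min.
by exists (f k - a) => [|j /k_min]; rewrite ?subr_gt0 // addrC subrK.
Qed.

Local Open Scope complex_scope.

Section Eigenvalues.
Variable R : realType.

Lemma char_poly_eigenvalues n (H : 'M[R[i]]_n) :
  char_poly H = \prod_(z <- eigenvalues H) ('X - z%:P).
Proof.
rewrite /eigenvalues; case: closed_field_poly_normal => s /= ->.
by rewrite (monicP (char_poly_monic H)) scale1r.
Qed.

Lemma size_eigenvalues n (H : 'M[R[i]]_n) : size (eigenvalues H) = n.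
Proof. by have := size_char_poly H; rewrite char_poly_eigenvalues size_prod_XsubC => -[]. Qed.

Lemma sum_eigenvalues n (H : 'M[R[i]]_n) : (0 < n)%N ->
  \sum_(z <- eigenvalues H) z = \tr H.
Proof.
move=> n_gt0; have := char_poly_trace H n_gt0.
have := @coefPn_prod_XsubC _ (eigenvalues H).
rewrite char_poly_eigenvalues size_eigenvalues -lt0n => /(_ n_gt0) ->.
exact: oppr_inj.
Qed.

Lemma prod_eigenvalues n (H : 'M[R[i]]_n) : \prod_(z <- eigenvalues H) z = \det H.
Proof.
have := char_poly_det H.
rewrite char_poly_eigenvalues coef0_prod_XsubC size_eigenvalues.
by apply: mulrI; rewrite unitrX ?unitrN1.
Qed.

Lemma hermitian_eigenvalue_real n (H : 'M[R[i]]_n) z :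
  hermitian_mx H -> z \in eigenvalues H -> z \is Num.real.
Proof.
move=> Hh z_eig; apply: hermitian_char_poly_root_real Hh _.
by rewrite char_poly_eigenvalues root_prod_XsubC.
Qed.

Lemma mx_signature4_eq0 (H : 'M[R[i]]_4) (r : R) :
  hermitian_mx H -> \tr H = 0 -> \det H = r%:C -> r != 0 ->
  (mx_signature H == 0) = (0 < r).
Proof.
move=> Hh trH0 detH r_neq0.
rewrite /mx_signature subr_eq0 eqz_nat.
have eig_real := @hermitian_eigenvalue_real _ H _ Hh.
have := sum_eigenvalues H isT; have := prod_eigenvalues H.
move: eig_real (size_eigenvalues H).
case: (eigenvalues H) => [|z1 [|z2 [|z3 [|z4 [|]]]]] // eig_real _.
have realE z : z \in [:: z1; z2; z3; z4] -> (complex.Re z)%:C = z.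
  by move=> z_eig; apply/RRe_real/eig_real.
rewrite -[z1]realE ?inE ?eqxx // -[z2]realE ?inE ?eqxx ?orbT //.
rewrite -[z3]realE ?inE ?eqxx ?orbT // -[z4]realE ?inE ?eqxx ?orbT //.
rewrite !big_cons !big_nil trH0 detH mulr1 addr0 -!rmorphD -!rmorphM.
move=> /complexI prodE /complexI sumE.
have ltcR0 (x : R) : (0 < x%:C) = (0 < x) by rewrite ltcE /= eqxx.
have ltc0R (x : R) : (x%:C < 0) = (x < 0) by rewrite ltcE /= eqxx.
rewrite /= !ltcR0 !ltc0R -prodE !mulrA count_pos_eq_count_neg4 //.
  by rewrite -sumE !addrA.
by rewrite -!mulrA prodE.
Qed.

End Eigenvalues.

Definition seifert_form (C : numClosedFieldType) (w : C) n (V : 'M[int]_n) : 'M[C]_n :=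
  let VC := map_mx intr V in (w - w^*)%R *: ((1 - w) *: VC - (1 - w^*)%R *: VC^T).

Lemma seifert_signatureE (R : realType) (w : R[i]) g (V : 'M[int]_(g.*2)) :
  seifert_signature w V = mx_signature (seifert_form w V).
Proof. by []. Qed.

Lemma hermitian_seifert_form (C : numClosedFieldType) (w : C) n (V : 'M[int]_n) :
  hermitian_mx (seifert_form w V).
Proof.
move=> i j; rewrite !mxE !(rmorphM, rmorphB) /= conjCK rmorph1 !rmorph_int.
ring.
Qed.

Lemma mxtrace_seifert_form (C : numClosedFieldType) (w : C) n (V : 'M[int]_n) :
  \tr (seifert_form w V) = - (w - w^*%R) ^+ 2 * (\tr V)%:~R.
Proof.
rewrite /mxtrace rmorph_sum mulr_sumr; apply: eq_bigr => i _.
by rewrite !mxE; ring.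
Qed.

(* For w = e^(i theta) in S this is tan^2(theta/2). *)
Definition tan2_half (R : realType) (w : R[i]) : R :=
  (1 - complex.Re w) ^+ 2 / complex.Im w ^+ 2.

Section UnitHalfCircle.
Variable R : realType.
Implicit Types w : R[i].

Lemma in_S_Im_gt0 w : in_S w -> 0 < complex.Im w.
Proof. by case=> _; rewrite -complexIm -[0]/(0%:C) ltcR. Qed.

Lemma in_S_normE w : in_S w -> complex.Re w ^+ 2 + complex.Im w ^+ 2 = 1.
Proof.
case: w => x y [+ _]; rewrite normc_def /= => /complexI norm1.
by rewrite -[LHS]sqr_sqrtr ?addr_ge0 ?sqr_ge0 // norm1 expr1n.
Qed.

Lemma tan2_half_S w : in_S w -> tan2_half w = (1 - complex.Re w) / (1 + complex.Re w).
Proof.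
move=> wS; have := in_S_normE wS; have := in_S_Im_gt0 wS.
case: w {wS} => x y /= y_gt0 norm1.
have x_lt1 : x < 1 by nra.
rewrite /tan2_half /=; apply/eqP; rewrite eqr_div ?expf_neq0 ?lt0r_neq0 //; last by nra.
have -> : y ^+ 2 = 1 - x ^+ 2 by lra.
by apply/eqP; ring.
Qed.

Lemma in_S_Re_bounds w : in_S w -> -1 < complex.Re w < 1.
Proof. by move=> wS; have := in_S_normE wS; have := in_S_Im_gt0 wS; nra. Qed.

Lemma tan2_half_gt0 w : in_S w -> 0 < tan2_half w.
Proof.
move=> wS; have /andP[x_gtN1 x_lt1] := in_S_Re_bounds wS.
by rewrite tan2_half_S // divr_gt0 //; lra.
Qed.

Lemma tan2_half_inj w1 w2 : in_S w1 -> in_S w2 -> tan2_half w1 = tan2_half w2 -> w1 = w2.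
Proof.
move=> w1S w2S; rewrite !tan2_half_S //.
have := in_S_normE w1S; have := in_S_normE w2S.
have := in_S_Im_gt0 w1S; have := in_S_Im_gt0 w2S.
have := in_S_Re_bounds w1S; have := in_S_Re_bounds w2S.
case: w1 w2 {w1S w2S} => [x1 y1] [x2 y2] /= /andP[? ?] /andP[? ?] y2_gt0 y1_gt0 norm2 norm1.
have d1 : 1 + x1 != 0 by rewrite lt0r_neq0 //; lra.
have d2 : 1 + x2 != 0 by rewrite lt0r_neq0 //; lra.
move/eqP; rewrite eqr_div // => /eqP crossE.
have x_eq : x1 = x2 by nra.
have : y1 ^+ 2 = y2 ^+ 2 by rewrite x_eq in norm1; lra.
by move/eqP; rewrite eqrXn2 ?ltW // => /eqP y_eq; rewrite x_eq y_eq.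
Qed.
End UnitHalfCircle.

Definition witness_entry (t M : int) (i j : nat) : int :=
  match i, j with
  | 0%N, 1%N | 0%N, 2%N | 0%N, 3%N | 1%N, 3%N => 1
  | 1%N, 0%N | 3%N, 0%N => -1
  | 1%N, 2%N => M - t
  | 2%N, 1%N => t - M
  | 2%N, 3%N => t
  | 3%N, 2%N => - t
  | _, _ => 0
  end.

Definition witness_mx (t M : int) : 'M[int]_(2.*2) :=
  \matrix_(i, j) witness_entry t M i j.

Lemma det_witness_pencil (Rg : comRingType) (t M : int) (b1 b2 : Rg) :
  let V := map_mx intr (witness_mx t M) in
  16%:R * \det (b1 *: V + b2 *: V^T) =
  (b1 + b2) ^+ 4 - (2 + 8 * M - 16 * t)%:~R * (b1 + b2) ^+ 2 * (b1 - b2) ^+ 2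
  + ((4 * M - 1) ^+ 2)%:~R * (b1 - b2) ^+ 4.
Proof.
move=> V; have -> : b1 *: V + b2 *: V^T =
  \matrix_(i < 4, j < 4) (b1 * (witness_entry t M i j)%:~R + b2 * (witness_entry t M j i)%:~R).
  by apply/matrixP => i j; rewrite !mxE.
do 3 rewrite !(expand_det_row _ ord0) !big_ord_recl !big_ord0 /cofactor.
rewrite !det_mx11 !mxE /bump /=.
ring.
Qed.

Lemma witness_mx_seifert (t M : int) : seifert_matrix (witness_mx t M).
Proof.
left; apply: (mulfI (x := 16 : int)) => //.
have /= := det_witness_pencil t M (1 : int) 1.
rewrite !scale1r map_mx_id => [->|z]; last exact: intz.
by rewrite mulr1; ring.
Qed.

Lemma mxtrace_witness_mx (t M : int) : \tr (witness_mx t M) = 0.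
Proof. by rewrite /mxtrace big1 // => -[[|[|[|[|?]]]] ?] _; rewrite mxE. Qed.

Definition witness_quad (R : ringType) (t M : int) (u : R) : R :=
  1 + (2 + 8 * M%:~R - 16 * t%:~R) * u + (4 * M%:~R - 1) ^+ 2 * u ^+ 2.

Lemma det_seifert_form_witness (R : realType) (x y : R) (t M : int) : y != 0 ->
  \det (seifert_form (x +i* y) (witness_mx t M)) =
  (16 * y ^+ 8 * witness_quad t M ((1 - x) ^+ 2 / y ^+ 2))%:C.
Proof.
move=> y_neq0; set w := x +i* y.
set b1 := (w - w^*%R) * (1 - w); set b2 := - ((w - w^*%R) * (1 - w^*%R)).
have -> : seifert_form w (witness_mx t M) =
          b1 *: map_mx intr (witness_mx t M) + b2 *: (map_mx intr (witness_mx t M))^T.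
  by rewrite /seifert_form scalerBr !scalerA scaleNr.
have := det_witness_pencil t M b1 b2.
have -> : b1 + b2 = (4%:R * y ^+ 2)%:C.
  by apply/eqP; rewrite eq_complex /=; apply/andP; split; apply/eqP; ring.
have -> : b1 - b2 = 'i * (4%:R * y * (1 - x))%:C.
  by apply/eqP; rewrite eq_complex /=; apply/andP; split; apply/eqP; ring.
set P := (_ * y ^+ 2)%:C; set Q := (_ * y * (1 - x))%:C.
have iQ2 : ('i * Q) ^+ 2 = - Q ^+ 2 by rewrite exprMn sqr_i mulN1r.
have iQ4 : ('i * Q) ^+ 4 = Q ^+ 4 by rewrite -[4%N]/(2 * 2)%N exprM iQ2 sqrrN -exprM.
rewrite iQ2 iQ4 /= => detE.
apply: (mulfI (x := 16%:R)); first by rewrite pnatr_eq0.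
rewrite detE /witness_quad /P /Q.
by field; rewrite fmorph_eq0.
Qed.

Lemma witness_quad_separates (R : archiRealFieldType) (T d : R) : 0 < T -> 0 < d ->
  exists t M : int,
    witness_quad t M T < 0 /\ forall u, T + d <= u -> 0 < witness_quad t M u.
Proof.
move=> T_gt0 d_gt0.
pose M := Num.floor ((T^-1 + 16) / d) + 1; pose m : R := 4 * M%:~R - 1.
have m2_gt : T^-1 + 16 < m ^+ 2 * d.
  have K_lt : (T^-1 + 16) / d < M%:~R by rewrite floorD1_gt.
  have M_ge1 : 1 <= M%:~R :> R.
    by rewrite rmorphD /= lerDr ler0z floor_ge0 ltW // divr_gt0 ?addr_gt0 ?invr_gt0.
  have mE : m = 4 * M%:~R - 1 by [].
  have m_le : m <= m ^+ 2 by rewrite expr2 ler_peMr //; lra.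
  by rewrite -ltr_pdivrMr //; lra.
(* With s := 16 t - 8 M - 2, Q(u) = 1 + u (m^2 u - s): t is chosen so that
   s lies just below m^2 (T + d), and M so that m^2 d exceeds 1/T + 16. *)
pose X := (m ^+ 2 * (T + d) + 8 * M%:~R + 2) / 16; pose t := Num.floor X.
pose s : R := 16 * t%:~R - 8 * M%:~R - 2.
have quadE u : witness_quad t M u = 1 + u * (m ^+ 2 * u - s).
  by rewrite /witness_quad -/m /s; ring.
have sE : s = 16 * t%:~R - 8 * M%:~R - 2 by [].
have XE : X * 16 = m ^+ 2 * (T + d) + 8 * M%:~R + 2 by rewrite mulfVK ?pnatr_eq0.
have s_le : s <= m ^+ 2 * (T + d).
  have := floor_le X; rewrite -/t -(ler_pM2r (_ : 0 < 16)) //; lra.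
have s_gt : m ^+ 2 * (T + d) - 16 < s.
  have := floorD1_gt X; rewrite -/t rmorphD /= -(ltr_pM2r (_ : 0 < 16)) //; lra.
exists t, M; split.
  have TTV : T * T^-1 = 1 by rewrite mulfV ?lt0r_neq0.
  rewrite quadE; nra.
move=> u u_ge; rewrite quadE.
have : m ^+ 2 * (T + d) <= m ^+ 2 * u by rewrite ler_wpM2l ?sqr_ge0.
nra.
Qed.

Lemma seifert_signature_witness_eq0 (R : realType) (w : R[i]) (t M : int) :
  complex.Im w != 0 -> witness_quad t M (tan2_half w) != 0 ->
  (seifert_signature w (witness_mx t M) == 0) = (0 < witness_quad t M (tan2_half w)).
Proof.
case: w => x y /= y_neq0 q_neq0.
have c_gt0 : 0 < 16 * y ^+ 8 :> R by rewrite mulr_gt0 // exprn_even_gt0 ?y_neq0 ?orbT.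
rewrite seifert_signatureE (mx_signature4_eq0 _ _ (det_seifert_form_witness x t M y_neq0)).
- by rewrite (pmulr_rgt0 _ c_gt0).
- exact: hermitian_seifert_form.
- by rewrite mxtrace_seifert_form mxtrace_witness_mx mulr0.
- exact: mulf_neq0 (lt0r_neq0 c_gt0) q_neq0.
Qed.

Lemma exists_seifert_isolating (R : realType) (I : finType) (w : I -> R[i]) (k : I) :
  (forall j, in_S (w j)) ->
  exists V : 'M[int]_(2.*2), [/\ seifert_matrix V, seifert_signature (w k) V != 0
    & forall j, tan2_half (w k) < tan2_half (w j) -> seifert_signature (w j) V = 0].
Proof.
move=> wS.
have [d d_gt0 gap] := gap_above (fun j => tan2_half (w j)) (tan2_half (w k)).
have [t [M [quad_k quad_far]]] := witness_quad_separates (tan2_half_gt0 (wS k)) d_gt0.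
have Im_neq0 j : complex.Im (w j) != 0 by rewrite lt0r_neq0 // in_S_Im_gt0.
exists (witness_mx t M); split; first exact: witness_mx_seifert.
  by rewrite seifert_signature_witness_eq0 ?Im_neq0 ?(ltr0_neq0 quad_k) // -leNgt ltW.
move=> j lt_kj; have quad_j := quad_far _ (gap _ lt_kj).
by apply/eqP; rewrite seifert_signature_witness_eq0 ?Im_neq0 ?(lt0r_neq0 quad_j).
Qed.

Theorem mainTheorem9 (R : realType) (N : nat) (w : 'I_N -> R[i]) (c : 'I_N -> R) :
  injective w ->
  (forall i, in_S (w i)) ->
  (forall (g : nat) (V : 'M[int]_(g.*2)), seifert_matrix V ->
     \sum_(i < N) c i * (seifert_signature (w i) V)%:~R = 0) ->
  forall i, c i = 0.
Proof.
move=> w_inj wS sum0 i; apply/eqP/contraT => ci_neq0.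
case: (arg_minP (P := fun j => c j != 0) (fun j => tan2_half (w j)) ci_neq0) => k ck_neq0 k_min.
have [V [V_seifert sig_k sig_far]] := exists_seifert_isolating k wS.
move: (sum0 _ V V_seifert); rewrite (bigD1 k) //= big1 ?addr0 => [|j j_neq_k].
  by move/eqP; rewrite mulf_eq0 intr_eq0 (negbTE ck_neq0) (negbTE sig_k).
have [-> | cj_neq0] := eqVneq (c j) 0; first by rewrite mul0r.
rewrite sig_far ?mulr0 // lt_neqAle k_min // andbT.
apply: contra j_neq_k => /eqP tan_eq.
by apply/eqP/w_inj/tan2_half_inj.
Qed.
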